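(* Let $p(1),\dots,p(K)\in[0,1]$, let $\mathbb F_i$ be the CDF of $\mathrm{Bern}(p(i))$, and for $\alpha\in\Delta^{K-1}$ write $\mathbb F_\alpha=\sum_i\alpha(i)\mathbb F_i$. Let $h(u)=\sqrt u-u$. Then: (1) for all $\alpha,\beta\in\Delta^{K-1}$, $U_h(\mathbb F_\alpha)-U_h(\mathbb F_\beta)\le\|\mathbb F_\alpha-\mathbb F_\beta\|_{\mathrm W}^{1/2}$; (2) let $\alpha^\star\in\arg\max_{\alpha\in\Delta^{K-1}}U_h(\mathbb F_\alpha)$ and $\mathbb F^\star=\mathbb F_{\alpha^\star}$. If $\max_i p(i)>\tfrac14$ and $\min_i p(i)<\tfrac14$, then $U_h(\mathbb F^\star)-U_h(\mathbb F_\alpha)\le\|\mathbb F^\star-\mathbb F_\alpha\|_{\mathrm W}$ for all $\alpha\in\Delta^{K-1}$; in all cases, $U_h(\mathbb F^\star)-U_h(\mathbb F_\alpha)\le\|\mathbb F^\star-\mathbb F_\alpha\|_{\mathrm W}^{1/2}$ for all $\alpha$.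
   Context: For a CDF $Q$ of a nonnegative random variable, $U_h(Q)=\int_0^\infty h(1-Q(x))\,dx$. $\|G-S\|_{\mathrm W}=\int|G(x)-S(x)|dx$ is the 1-Wasserstein distance. $\Delta^{K-1}$ is the probability simplex in $\mathbb R^K$. *)

From HB Require Import structures.
From mathcomp Require Import all_boot all_order all_algebra.
From mathcomp Require Import all_classical all_reals all_analysis.
Set Implicit Arguments. Unset Strict Implicit. Unset Printing Implicit Defensive.
Import Order.TTheory GRing.Theory Num.Theory.
Local Open Scope classical_set_scope.
Local Open Scope ring_scope.

Definition bern_cdf (R : realType) (p : R) (x : R) : R :=
  if x < 0 then 0 else if x < 1 then 1 - p else 1.

Definition simplex (R : realType) (K : nat) (a : 'I_K -> R) : Prop :=
  (forall i, 0 <= a i) /\ \sum_(i < K) a i = 1.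

Definition mix_cdf (R : realType) (K : nat) (p : 'I_K -> R) (a : 'I_K -> R)
  (x : R) : R := \sum_(i < K) a i * bern_cdf (p i) x.

Definition U_h (R : realType) (h : R -> R) (Q : R -> R) : R :=
  Rintegral (@lebesgue_measure R) `[0%R, +oo[ (fun x => h (1 - Q x)).

Definition wass (R : realType) (G S : R -> R) : R :=
  Rintegral (@lebesgue_measure R) setT (fun x => `|G x - S x|).

Definition hsq (R : realType) (u : R) : R := Num.sqrt u - u.

(* A mixture of Bernoulli CDFs is the Bernoulli CDF of the mixed mean q, and for Bernoulli
   CDFs U_h reduces to h(q) and the Wasserstein distance to |q - q'|.  Everything then
   follows from elementary properties of h(u) = sqrt u - u on [0,1]: its increments are
   bounded by sqrt |x - y|, and its maximum 1/4 is attained only at u = 1/4, where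
   1/4 - h(y) = (sqrt y - 1/2)^2 <= |y - 1/4|.  When some p(i) > 1/4 > p(j), mixing the
   two vertices i and j reaches mean 1/4, so every maximiser has mean exactly 1/4. *)
From HB Require Import structures.
From mathcomp Require Import all_boot all_order all_algebra.
From mathcomp Require Import all_classical all_reals all_analysis.
From mathcomp Require Import ring lra.
Set Implicit Arguments. Unset Strict Implicit. Unset Printing Implicit Defensive.
Import Order.TTheory GRing.Theory Num.Theory numFieldNormedType.Exports.
Local Open Scope ring_scope.

Section BernoulliFunctionals.
Context {R : realType}.

Lemma Rintegral_co01_step (D : set R) (f : R -> R) (c : R) :
  (forall x, (f \_ D) x = if (0 <= x) && (x < 1) then c else 0) ->
  Rintegral (@lebesgue_measure R) D f = c.
Proof.
move=> fE; rewrite Rintegral_mkcond.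
transitivity (Rintegral (@lebesgue_measure R) `[0, 1[%classic (fun=> c)).
  rewrite [RHS]Rintegral_mkcond; congr Rintegral; apply/funext => x.
  by rewrite fE patchE mem_setE in_itv.
have len01 := @lebesgue_measure_itv R `[0, 1[%R.
rewrite /= lte_fin ltr01 oppr0 adde0 in len01.
by rewrite Rintegral_cst //= len01 mulr1.
Qed.

Lemma U_h_bern_cdf (h : R -> R) (q : R) : h 0 = 0 -> U_h h (bern_cdf q) = h q.
Proof.
move=> h0; apply: Rintegral_co01_step => x.
rewrite patchE mem_setE in_itv /= andbT /bern_cdf.
have [x0 | x0] := ltrP x 0; first by [].
by case: ifP => _; rewrite ?subrr // opprB addrC subrK.
Qed.

Lemma wass_bern_cdf (q q' : R) : wass (bern_cdf q) (bern_cdf q') = `|q - q'|.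
Proof.
apply: Rintegral_co01_step => x; rewrite patchE in_setT /bern_cdf.
have [x0 | x0] := ltrP x 0; first by rewrite subrr normr0.
case: ifP => _ /=; last by rewrite subrr normr0.
by rewrite -normrN; congr `|_|; ring.
Qed.

Definition mix_mean (K : nat) (p a : 'I_K -> R) : R := \sum_(i < K) a i * p i.

Lemma mix_cdf_bern (K : nat) (p a : 'I_K -> R) :
  simplex a -> mix_cdf p a = bern_cdf (mix_mean p a).
Proof.
move=> [_ a1]; apply/funext => x; rewrite /mix_cdf /bern_cdf /mix_mean.
case: ifP => _; first by rewrite big1 // => i _; rewrite mulr0.
case: ifP => _; last by rewrite -[RHS]a1; apply: eq_bigr => i _; rewrite mulr1.
by rewrite -[X in X - _]a1 -sumrB; apply: eq_bigr => i _; rewrite mulrBr mulr1.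
Qed.

Lemma mix_mean_ge0_le1 (K : nat) (p a : 'I_K -> R) :
  (forall i, 0 <= p i <= 1) -> simplex a -> 0 <= mix_mean p a <= 1.
Proof.
move=> hp [a0 a1]; apply/andP; split.
  by apply: sumr_ge0 => i _; apply: mulr_ge0 => //; case/andP: (hp i).
rewrite -a1; apply: ler_sum => i _.
by rewrite -[leRHS]mulr1; apply: ler_wpM2l => //; case/andP: (hp i).
Qed.

Lemma mix_mean_between (K : nat) (p : 'I_K -> R) (i j : 'I_K) (c : R) :
  p j < c -> c < p i -> exists a, simplex a /\ mix_mean p a = c.
Proof.
move=> pjc cpi.
have ij : i != j by apply/eqP => eij; move: (lt_trans pjc cpi); rewrite eij ltxx.
have dpos : 0 < p i - p j by rewrite subr_gt0; apply: lt_trans cpi.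
pose t := (c - p j) / (p i - p j).
have t0 : 0 <= t by rewrite /t divr_ge0 ?(ltW dpos) // subr_ge0 (ltW pjc).
have t1 : t <= 1 by rewrite /t ler_pdivrMr // mul1r; lra.
pose a k := if k == i then t else if k == j then 1 - t else 0.
have two_point g : \sum_(k < K) a k * g k = t * g i + (1 - t) * g j.
  rewrite /a (bigD1 i) //= eqxx (bigD1 j) /=; last by rewrite eq_sym.
  rewrite eq_sym (negbTE ij) eqxx addrA big1 ?addr0 // => k /andP[ki kj].
  by rewrite (negbTE ki) (negbTE kj) mul0r.
exists a; split; last by rewrite /mix_mean two_point /t; field; rewrite lt0r_neq0.
split; first by move=> k; rewrite /a; case: ifP => _ //; case: ifP; rewrite ?subr_ge0.
have := two_point (fun=> 1); rewrite !mulr1 subrKC => <-.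
by apply: eq_bigr => k _; rewrite mulr1.
Qed.

Lemma hsq_sub_le_sqrt (x y : R) : 0 <= x <= 1 -> 0 <= y <= 1 ->
  hsq x - hsq y <= Num.sqrt `|x - y|.
Proof.
move=> /andP[x0 x1] /andP[y0 y1]; rewrite /hsq.
have := sqr_sqrtr x0; have := sqr_sqrtr y0; have := sqr_sqrtr (normr_ge0 (x - y)).
have := sqrtr_ge0 x; have := sqrtr_ge0 y; have := sqrtr_ge0 `|x - y|.
move: (Num.sqrt x) (Num.sqrt y) (Num.sqrt `|x - y|) => sx sy sd sd0 sy0 sx0 hd hy hx.
have [yx | xy] := lerP y x.
  rewrite ger0_norm ?subr_ge0 // in hd.
  have : sy <= sx by nra.
  nra.
rewrite ltr0_norm ?subr_lt0 // in hd.
(* Here the increment of h is at most y - x, and y - x <= 1 gives y - x <= sqrt (y - x). *)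
have : sx <= sy by nra.
have : sd <= 1 by nra.
nra.
Qed.

Lemma hsq_quarter : hsq (1 / 4 : R) = 1 / 4.
Proof.
have -> : (1 / 4 : R) = (1 / 2) ^+ 2 by field.
by rewrite /hsq sqrtr_sqr ger0_norm // expr2; lra.
Qed.

Lemma hsq_ge_quarter (x : R) : 0 <= x -> 1 / 4 <= hsq x -> x = 1 / 4.
Proof.
move=> x0; rewrite /hsq; have := sqr_sqrtr x0; have := sqrtr_ge0 x.
move: (Num.sqrt x) => sx sx0 hx hge.
have : (sx - 1 / 2) ^+ 2 = 0 by have := sqr_ge0 (sx - 1 / 2); nra.
move/eqP; rewrite sqrf_eq0 subr_eq0 => /eqP sxE.
by rewrite -hx sxE; field.
Qed.

Lemma quarter_sub_hsq_le (y : R) : 0 <= y -> 1 / 4 - hsq y <= `|1 / 4 - y|.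
Proof.
move=> y0; rewrite /hsq; have := sqr_sqrtr y0; have := sqrtr_ge0 y.
move: (Num.sqrt y) => sy sy0 hy.
by have [yq | yq] := lerP y (1 / 4); nra.
Qed.

End BernoulliFunctionals.

Theorem mainTheorem6 (R : realType) (K : nat) (p : 'I_K -> R)
  (hp : forall i, 0 <= p i <= 1) :
  (forall a b : 'I_K -> R, simplex a -> simplex b ->
     U_h (@hsq R) (mix_cdf p a) - U_h (@hsq R) (mix_cdf p b)
       <= Num.sqrt (wass (mix_cdf p a) (mix_cdf p b)))
  /\
  (forall astar : 'I_K -> R, simplex astar ->
     (forall a : 'I_K -> R, simplex a ->
        U_h (@hsq R) (mix_cdf p a) <= U_h (@hsq R) (mix_cdf p astar)) ->
     (((exists i, 1 / 4 < p i) /\ (exists j, p j < 1 / 4)) ->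
        forall a : 'I_K -> R, simplex a ->
          U_h (@hsq R) (mix_cdf p astar) - U_h (@hsq R) (mix_cdf p a)
            <= wass (mix_cdf p astar) (mix_cdf p a))
     /\
     (forall a : 'I_K -> R, simplex a ->
          U_h (@hsq R) (mix_cdf p astar) - U_h (@hsq R) (mix_cdf p a)
            <= Num.sqrt (wass (mix_cdf p astar) (mix_cdf p a)))).
Proof.
have hsq0 : hsq (0 : R) = 0 by rewrite /hsq sqrtr0 subr0.
have mixE a : simplex a -> U_h (@hsq R) (mix_cdf p a) = hsq (mix_mean p a).
  by move=> sa; rewrite mix_cdf_bern // U_h_bern_cdf.
have wassE a b : simplex a -> simplex b ->
    wass (mix_cdf p a) (mix_cdf p b) = `|mix_mean p a - mix_mean p b|.
  by move=> sa sb; rewrite !mix_cdf_bern // wass_bern_cdf.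
have part1 a b : simplex a -> simplex b ->
    U_h (@hsq R) (mix_cdf p a) - U_h (@hsq R) (mix_cdf p b)
      <= Num.sqrt (wass (mix_cdf p a) (mix_cdf p b)).
  by move=> sa sb; rewrite !mixE // wassE //; apply: hsq_sub_le_sqrt;
    apply: mix_mean_ge0_le1.
split=> // ast sast ast_max; split=> [[[i hi] [j hj]] a sa | a sa]; last exact: part1.
have [aq [saq aqE]] := mix_mean_between hj hi.
have /andP[ast0 _] := mix_mean_ge0_le1 hp sast.
have /andP[a0 _] := mix_mean_ge0_le1 hp sa.
have := ast_max aq saq; rewrite !mixE // aqE hsq_quarter => /(hsq_ge_quarter ast0) astE.
by rewrite wassE // astE hsq_quarter; apply: quarter_sub_hsq_le.
Qed.
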